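(* Let $M\in\mathbb N$, $\alpha\in\mathbb N$, and let $f$ be a polynomial of degree at most $M$. Then $$\int_0^\pi f(\cos\vartheta)\sin^\alpha\vartheta\,d\vartheta=\sum_{u=0}^M\chi_u\, f\!\left(\cos\frac{u\pi}{M}\right),$$ where $\chi_u=\epsilon_u\,\omega_u$ with $\epsilon_0=\epsilon_M=\tfrac12$, $\epsilon_u=1$ for $u=1,\dots,M-1$ (and $\epsilon_{2\mu}$ defined by the same rule), and $$\omega_u=\frac{\pi\,\alpha!}{2^{\alpha-1}M}\sum_{\mu=0}^{\lfloor M/2\rfloor}\frac{\epsilon_{2\mu}(-1)^{\mu}\cos\frac{2\mu u\pi}{M}}{\Gamma\left(\frac{\alpha}{2}-\mu+1\right)\Gamma\left(\frac{\alpha}{2}+\mu+1\right)},$$ where a summand is understood to be $0$ whenever $\frac{\alpha}{2}-\mu+1$ is a non-positive integer (i.e. $1/\Gamma$ is taken to be $0$ at the poles of $\Gamma$).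
   Context: $\Gamma$ denotes the Euler Gamma function and $\lfloor\cdot\rfloor$ the integer part. *)

From Stdlib Require Import Reals List Factorial.
From Coquelicot Require Import Coquelicot.
Open Scope R_scope.

Definition Gamma_pos (x : R) : R :=
  RInt_gen (fun t => Rpower t (x - 1) * exp (- t)) (at_right 0) (Rbar_locally p_infty).

(* Reciprocal Gamma function 1/Gamma(x) on all of R, via the functional equation
   Gamma(x) = Gamma(x+n) / (x (x+1) ... (x+n-1)) with n chosen so that x + n > 0.
   At the poles x = 0, -1, -2, ... the product vanishes, so rgamma x = 0 there,
   which is exactly the convention "1/Gamma := 0 at the poles". *)
Definition rgamma_shift (x : R) : nat := Z.to_nat (up (- x)).
Definition rgamma (x : R) : R :=
  let n := rgamma_shift x in
  (fold_right Rmult 1 (map (fun k => x + INR k) (seq 0 n))) / Gamma_pos (x + INR n).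

Definition eps (M u : nat) : R :=
  if orb (Nat.eqb u 0) (Nat.eqb u M) then / 2 else 1.

Definition omega (M alpha u : nat) : R :=
  PI * INR (fact alpha) / (powerRZ 2 (Z.of_nat alpha - 1) * INR M) *
  sum_f_R0 (fun mu =>
      eps M (2 * mu) * (-1) ^ mu * cos (INR (2 * mu * u) * PI / INR M)
      * rgamma (INR alpha / 2 - INR mu + 1) * rgamma (INR alpha / 2 + INR mu + 1))
    (Nat.div M 2).

Definition chi (M alpha u : nat) : R := eps M u * omega M alpha u.

Definition poly_eval (a : nat -> R) (M : nat) (x : R) : R :=
  sum_f_R0 (fun k => a k * x ^ k) M.

(* The rule is linear in f, and cos^k th is a combination of the cos (j th), j <= k, so it
   suffices that it be exact for cos (j th), j <= M.  The corresponding moment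
   int_0^PI sin^a th cos (j th) d th vanishes for odd j (symmetry th -> PI - th), and for
   j = 2 mu it equals PI a! (-1)^mu / (2^a Gamma(a/2 - mu + 1) Gamma(a/2 + mu + 1)): both sides
   obey the same three-term recursion a -> a + 2 (from sin^2 = (1 - cos (2 th)) / 2) and agree
   for a = 0 and a = 1, the latter by Gamma(1/2) = sqrt PI, i.e. the Gaussian integral.
   On the nodes th_u = u PI / M the trapezoidal weights eps_u make the cos (p th), p <= M,
   orthogonal: eps_p sum_u eps_u cos (p th_u) cos (q th_u) = [p = q] M / 2.  Hence
   sum_u chi_u cos (j th_u) extracts the term mu = j / 2 of omega_u, which is that moment. *)

From Stdlib Require Import Reals Lra Lia List ZArith.
From Coquelicot Require Import Coquelicot.
Open Scope R_scope.
Set Bullet Behavior "Strict Subproofs".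

Lemma ex_derive_continuous_R (f : R -> R) x : ex_derive f x -> continuous f x.
Proof. apply (ex_derive_continuous (V := R_NormedModule)). Qed.

Lemma ex_RInt_of_ex_derive (f : R -> R) a b : (forall x, ex_derive f x) -> ex_RInt f a b.
Proof.
  intros Hf. apply (ex_RInt_continuous (V := R_CompleteNormedModule)).
  intros z _. apply ex_derive_continuous_R, Hf.
Qed.

Lemma RInt_ext_R (f g : R -> R) a b : (forall x, f x = g x) -> RInt f a b = RInt g a b.
Proof. intros H. apply RInt_ext. intros x _. apply H. Qed.

Lemma RInt_of_antiderivative (f F : R -> R) a b :
  (forall x, is_derive F x (f x)) -> (forall x, continuous f x) -> RInt f a b = F b - F a.
Proof.
  intros HF Hf. apply (is_RInt_unique (V := R_CompleteNormedModule)).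
  apply (is_RInt_derive (V := R_CompleteNormedModule) F f); auto.
Qed.

(** * The Gamma function at half-integers *)

Lemma filterlim_p_infty_of_eps (f : R -> R) (l : R) :
  (forall eps, 0 < eps -> exists M, forall t, M < t -> Rabs (f t - l) < eps) ->
  filterlim f (Rbar_locally p_infty) (locally l).
Proof.
  intros H. apply filterlim_locally. intros eps.
  destruct (H eps (cond_pos eps)) as [M HM]. exists M. exact HM.
Qed.

Lemma filterlim_at_right_0_of_eps (f : R -> R) (l : R) :
  (forall eps, 0 < eps -> exists d, 0 < d /\ forall t, 0 < t < d -> Rabs (f t - l) < eps) ->
  filterlim f (at_right 0) (locally l).
Proof.
  intros H. apply filterlim_locally. intros eps.
  destruct (H eps (cond_pos eps)) as [d [Hd HM]]. exists (mkposreal d Hd).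
  intros t Ht Ht0. apply HM. split; [exact Ht0|].
  apply Rabs_def2 in Ht. unfold minus, plus, opp in Ht; simpl in Ht. lra.
Qed.

Lemma filterlim_opp_0 {F : (R -> Prop) -> Prop} {FF : Filter F} (g : R -> R) :
  filterlim g F (locally 0) -> filterlim (fun t => - g t) F (locally 0).
Proof.
  intros H. rewrite <- Ropp_0.
  apply (filterlim_comp _ _ _ g Ropp _ (locally 0)); [exact H | apply (filterlim_opp 0)].
Qed.

Lemma is_RInt_gen_of_antiderivative (f F : R -> R) (la lb : R) :
  (forall a b, 0 < a -> 0 < b -> is_RInt f a b (F b - F a)) ->
  filterlim F (at_right 0) (locally la) ->
  filterlim F (Rbar_locally p_infty) (locally lb) ->
  is_RInt_gen f (at_right 0) (Rbar_locally p_infty) (lb - la).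
Proof.
  intros Hf Ha Hb P [eps HP].
  destruct (proj1 (filterlim_locally _ _) Ha (pos_div_2 eps)) as [d Hd].
  destruct (proj1 (filterlim_locally _ _) Hb (pos_div_2 eps)) as [M HM].
  apply (Filter_prod _ _ _ (fun a => 0 < a /\ ball la (pos_div_2 eps) (F a))
                           (fun b => Rmax M 0 < b)).
  - exists d. intros y Hy Hy0. split; auto.
  - exists (Rmax M 0). auto.
  - intros a b [Ha0 Hab] Hbb. exists (F b - F a). split.
    + apply Hf; [exact Ha0|]. pose proof (Rmax_r M 0); lra.
    + apply HP. assert (HMb : M < b) by (pose proof (Rmax_l M 0); lra).
      specialize (HM b HMb). revert Hab HM. unfold ball; simpl; unfold AbsRing_ball; simpl.
      unfold abs, minus, plus, opp; simpl. intros H1 H2.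
      replace (F b - F a + - (lb - la)) with ((F b + - lb) - (F a + - la)) by ring.
      eapply Rle_lt_trans; [apply Rabs_triang|]. rewrite Rabs_Ropp. simpl in *. lra.
Qed.

Lemma ln_lt_2_sqrt t : 0 < t -> ln t < 2 * sqrt t.
Proof.
  intros Ht. assert (Hs : 0 < sqrt t) by (apply sqrt_lt_R0; auto).
  replace t with (sqrt t * sqrt t) at 1 by (apply sqrt_sqrt; lra).
  rewrite ln_mult by auto.
  assert (ln (sqrt t) < sqrt t).
  { rewrite <- (ln_exp (sqrt t)) at 2. apply ln_increasing; [exact Hs|].
    pose proof (exp_ineq1 (sqrt t)). lra. }
  lra.
Qed.

Lemma filterlim_Rpower_exp_p_infty x : 0 < x ->
  filterlim (fun t => Rpower t x * exp (- t)) (Rbar_locally p_infty) (locally 0).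
Proof.
  intros Hx. apply filterlim_p_infty_of_eps. intros eps Heps.
  set (L := Rabs (ln eps)).
  exists ((2 * x + L + 1) ^ 2). intros t Ht.
  assert (HL : - L <= ln eps) by (unfold L; pose proof (Rle_abs (- ln eps)); rewrite Rabs_Ropp in *; lra).
  assert (HL0 : 0 <= L) by apply Rabs_pos.
  assert (Ht0 : 0 < t) by (assert (0 < (2 * x + L + 1) ^ 2) by (apply pow_lt; lra); lra).
  assert (Hs : 2 * x + L + 1 < sqrt t).
  { rewrite <- (sqrt_pow2 (2 * x + L + 1)) by lra. apply sqrt_lt_1_alt. split; auto.
    apply pow2_ge_0. }
  rewrite Rminus_0_r. unfold Rpower. rewrite <- exp_plus.
  rewrite Rabs_pos_eq by (left; apply exp_pos).
  rewrite <- (exp_ln eps) by auto. apply exp_increasing.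
  (* x ln t < 2 x sqrt t < t - L *)
  pose proof (ln_lt_2_sqrt t Ht0).
  assert (x * ln t < x * (2 * sqrt t)) by (apply Rmult_lt_compat_l; auto).
  assert (Hss : sqrt t * sqrt t = t) by (apply sqrt_sqrt; lra).
  assert (sqrt t * (sqrt t - 2 * x) > 1 * (L + 1)) by (apply Rmult_gt_0_lt_compat; lra).
  nra.
Qed.

Lemma filterlim_Rpower_exp_at_right_0 x : 0 < x ->
  filterlim (fun t => Rpower t x * exp (- t)) (at_right 0) (locally 0).
Proof.
  intros Hx. apply filterlim_at_right_0_of_eps. intros eps Heps.
  exists (Rmin 1 (exp (ln eps / x))). split; [apply Rmin_pos; [lra | apply exp_pos]|].
  intros t [Ht1 Ht2]. rewrite Rminus_0_r.
  unfold Rpower. rewrite Rabs_pos_eq by (left; apply Rmult_lt_0_compat; apply exp_pos).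
  assert (exp (- t) < 1) by (rewrite <- exp_0; apply exp_increasing; lra).
  assert (exp (x * ln t) < eps).
  { rewrite <- (exp_ln eps) by auto. apply exp_increasing.
    assert (Hlt : ln t < ln eps / x).
    { rewrite <- (ln_exp (ln eps / x)). apply ln_increasing; auto.
      pose proof (Rmin_r 1 (exp (ln eps / x))). lra. }
    apply Rmult_lt_compat_l with (r := x) in Hlt; auto.
    replace (x * (ln eps / x)) with (ln eps) in Hlt by (field; lra). exact Hlt. }
  pose proof (exp_pos (x * ln t)). pose proof (exp_pos (- t)). nra.
Qed.

Definition Gamma_integrand (x t : R) : R := Rpower t (x - 1) * exp (- t).

Lemma is_RInt_gen_Gamma_1 :
  is_RInt_gen (Gamma_integrand 1) (at_right 0) (Rbar_locally p_infty) 1.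
Proof.
  replace 1 with (0 - (-1)) at 2 by ring.
  apply is_RInt_gen_of_antiderivative with (F := fun t => - exp (- t)).
  - intros a b Ha Hb.
    apply is_RInt_ext with (f := fun t => exp (- t)).
    { intros x Hx. assert (0 < x) by (pose proof (Rmin_pos a b Ha Hb); lra).
      unfold Gamma_integrand. rewrite Rminus_diag, Rpower_O by auto.
      symmetry; apply Rmult_1_l. }
    apply (is_RInt_derive (fun t => - exp (- t))).
    + intros x _. auto_derive; auto; ring.
    + intros x _. apply ex_derive_continuous_R. auto_derive. auto.
  - apply (filterlim_filter_le_1 (F := locally 0)); [apply filter_le_within|].
    replace (-1) with (- exp (- 0)) by (rewrite Ropp_0, exp_0; ring).
    apply (ex_derive_continuous_R (fun t => - exp (- t)) 0). auto_derive; auto.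
  - apply filterlim_p_infty_of_eps. intros eps Heps. exists (Rabs (ln eps)). intros t Ht.
    rewrite Rminus_0_r, Rabs_Ropp, Rabs_pos_eq by (left; apply exp_pos).
    rewrite <- (exp_ln eps) by auto. apply exp_increasing.
    pose proof (Rle_abs (- ln eps)). rewrite Rabs_Ropp in *. lra.
Qed.

Lemma is_RInt_gen_Gamma_succ x l : 0 < x ->
  is_RInt_gen (Gamma_integrand x) (at_right 0) (Rbar_locally p_infty) l ->
  is_RInt_gen (Gamma_integrand (x + 1)) (at_right 0) (Rbar_locally p_infty) (x * l).
Proof.
  intros Hx Hl.
  set (H := fun t => - (Rpower t x * exp (- t))).
  set (dH := fun t => - (x * Gamma_integrand x t) + Gamma_integrand (x + 1) t).
  assert (Hpow : forall t, 0 < t -> Gamma_integrand (x + 1) t = Rpower t x * exp (- t)).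
  { intros t Ht. unfold Gamma_integrand. f_equal. f_equal. ring. }
  assert (HdH : is_RInt_gen dH (at_right 0) (Rbar_locally p_infty) (0 - 0)).
  { apply is_RInt_gen_of_antiderivative with (F := H).
    - intros a b Ha Hb. apply (is_RInt_derive H dH).
      + intros y Hy. assert (Hy0 : 0 < y) by (pose proof (Rmin_pos a b Ha Hb); lra).
        unfold H, dH. rewrite (Hpow y Hy0). unfold Gamma_integrand.
        assert (D1 : is_derive (fun t => Rpower t x) y (x * Rpower y (x - 1))).
        { apply is_derive_Reals. apply derivable_pt_lim_power; auto. }
        assert (D2 : is_derive (fun t => exp (- t)) y (- exp (- y))) by (auto_derive; auto; ring).
        eapply is_derive_ext; [intros t; reflexivity|].
        replace (- (x * (Rpower y (x - 1) * exp (- y))) + Rpower y x * exp (- y))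
          with (- (x * Rpower y (x - 1) * exp (- y) + Rpower y x * - exp (- y))) by ring.
        apply (is_derive_opp (fun t => Rpower t x * exp (- t))).
        apply (is_derive_mult _ _ _ _ _ D1 D2 Rmult_comm).
      + intros y Hy. assert (0 < y) by (pose proof (Rmin_pos a b Ha Hb); lra).
        apply ex_derive_continuous_R. unfold dH, Gamma_integrand, Rpower.
        auto_derive. repeat split; auto.
    - apply filterlim_opp_0, filterlim_Rpower_exp_at_right_0, Hx.
    - apply filterlim_opp_0, filterlim_Rpower_exp_p_infty, Hx. }
  replace (x * l) with (plus (0 - 0) (scal x l)) by (unfold plus, scal; simpl; unfold mult; simpl; ring).
  eapply is_RInt_gen_ext; [| exact (is_RInt_gen_plus _ _ _ _ HdH (is_RInt_gen_scal _ x _ Hl))].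
  apply filter_forall. intros ab y _.
  unfold dH, plus, scal; simpl; unfold mult; simpl. ring.
Qed.

Definition gauss (t : R) : R := exp (- (t * t)).
Definition gauss_int (x : R) : R := RInt gauss 0 x.

(* [gauss_int x ^ 2 + gauss_aux x] has derivative 0 and [gauss_aux] vanishes at infinity,
   whence [gauss_int (+oo) = sqrt PI / 2]. *)
Definition gauss_aux_integrand (x t : R) : R := exp (- (x * x) * (1 + t * t)) / (1 + t * t).
Definition gauss_aux (x : R) : R := RInt (gauss_aux_integrand x) 0 1.

Lemma one_add_sqr_pos t : 0 < 1 + t * t.
Proof. pose proof (Rle_0_sqr t). unfold Rsqr in *. lra. Qed.

Lemma ex_RInt_gauss a b : ex_RInt gauss a b.
Proof. apply ex_RInt_of_ex_derive. intros. unfold gauss. auto_derive. auto. Qed.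

Lemma is_derive_gauss_int x : is_derive gauss_int x (gauss x).
Proof.
  apply (is_derive_RInt gauss gauss_int 0 x).
  - apply filter_forall. intros b. apply (RInt_correct (V := R_CompleteNormedModule)), ex_RInt_gauss.
  - apply ex_derive_continuous_R. unfold gauss. auto_derive. auto.
Qed.

Lemma Derive_gauss_aux_integrand x t :
  Derive (fun y => gauss_aux_integrand y t) x = - 2 * x * exp (- (x * x) * (1 + t * t)).
Proof.
  apply is_derive_unique. unfold gauss_aux_integrand. pose proof (one_add_sqr_pos t).
  auto_derive; [lra | field; lra].
Qed.

Lemma is_derive_gauss_aux x : is_derive gauss_aux x (- 2 * gauss x * gauss_int x).
Proof.
  assert (Hcont : forall t, Rmin 0 1 <= t <= Rmax 0 1 ->
     continuity_2d_pt (fun u v => Derive (fun z => gauss_aux_integrand z v) u) x t).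
  { intros t _.
    apply continuity_2d_pt_ext with (f := fun u v => - 2 * u * exp (- (u * u) * (1 + v * v))).
    { intros; rewrite Derive_gauss_aux_integrand; auto. }
    apply continuity_2d_pt_mult.
    - apply continuity_2d_pt_mult; [apply continuity_2d_pt_const | apply continuity_2d_pt_id1].
    - apply continuity_1d_2d_pt_comp with (f := exp).
      + apply derivable_continuous_pt, derivable_pt_exp.
      + apply continuity_2d_pt_mult.
        * apply continuity_2d_pt_opp, continuity_2d_pt_mult; apply continuity_2d_pt_id1.
        * apply continuity_2d_pt_plus; [apply continuity_2d_pt_const|].
          apply continuity_2d_pt_mult; apply continuity_2d_pt_id2. }
  eapply is_derive_ext; [intros y; reflexivity|].
  replace (- 2 * gauss x * gauss_int x)
    with (RInt (fun t => Derive (fun u => gauss_aux_integrand u t) x) 0 1).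
  - apply (is_derive_RInt_param gauss_aux_integrand 0 1 x); [| exact Hcont |].
    + apply filter_forall. intros y t _. unfold gauss_aux_integrand.
      pose proof (one_add_sqr_pos t). auto_derive. lra.
    + apply filter_forall. intros y. apply ex_RInt_of_ex_derive. intros t.
      unfold gauss_aux_integrand. pose proof (one_add_sqr_pos t). auto_derive. lra.
  - (* substitute s = x t *)
    rewrite (RInt_ext _ (fun t => scal x ((fun s => - 2 * gauss x * gauss s) (x * t + 0)))).
    2:{ intros t _. rewrite Derive_gauss_aux_integrand. unfold scal; simpl; unfold mult; simpl.
        unfold gauss. replace (- (x * x) * (1 + t * t))
          with (- (x * x) + - ((x * t + 0) * (x * t + 0))) by ring.
        rewrite exp_plus. ring. }
    etransitivity.
    { apply (RInt_comp_lin (V := R_CompleteNormedModule) (fun s => - 2 * gauss x * gauss s)).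
      apply ex_RInt_of_ex_derive. intros. unfold gauss; auto_derive; auto. }
    rewrite Rmult_0_r, Rmult_1_r, !Rplus_0_r.
    apply (RInt_scal (V := R_CompleteNormedModule) gauss), ex_RInt_gauss.
Qed.

Lemma gauss_aux_0 : gauss_aux 0 = PI / 4.
Proof.
  unfold gauss_aux. rewrite (RInt_ext _ (fun t => / (1 + t ^ 2))).
  2:{ intros t _. unfold gauss_aux_integrand.
      replace (- (0 * 0) * (1 + t * t)) with 0 by ring. rewrite exp_0.
      unfold Rdiv. rewrite Rmult_1_l. f_equal. ring. }
  rewrite <- atan_1, (RInt_of_antiderivative _ atan).
  - rewrite atan_0. ring.
  - intros x. apply is_derive_Reals, derivable_pt_lim_atan.
  - intros x. apply ex_derive_continuous_R. auto_derive. pose proof (one_add_sqr_pos x). lra.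
Qed.

Lemma gauss_int_sqr_add_aux x : gauss_int x * gauss_int x + gauss_aux x = PI / 4.
Proof.
  set (h := fun y => gauss_int y * gauss_int y + gauss_aux y).
  assert (Hd : forall y, is_derive h y 0).
  { intros y. unfold h. eapply is_derive_ext; [intros z; reflexivity|].
    replace 0 with (plus (gauss y * gauss_int y + gauss_int y * gauss y) (- 2 * gauss y * gauss_int y))
      by (unfold plus; simpl; ring).
    apply (is_derive_plus (fun y => gauss_int y * gauss_int y) gauss_aux);
      [| apply is_derive_gauss_aux].
    apply (is_derive_mult gauss_int gauss_int); [apply is_derive_gauss_int.. | apply Rmult_comm]. }
  assert (Hh : h x - h 0 = 0).
  { rewrite <- (RInt_of_antiderivative (fun _ => 0) h 0 x Hd (fun y => continuous_const 0 y)).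
    rewrite RInt_const. unfold scal; simpl; unfold mult; simpl. ring. }
  assert (h 0 = PI / 4).
  { unfold h, gauss_int. rewrite RInt_point, gauss_aux_0. unfold zero; simpl. ring. }
  change (h x = PI / 4). lra.
Qed.

Lemma gauss_aux_bounds x : 0 <= gauss_aux x <= gauss x.
Proof.
  assert (Hex : ex_RInt (gauss_aux_integrand x) 0 1).
  { apply ex_RInt_of_ex_derive. intros t. unfold gauss_aux_integrand.
    pose proof (one_add_sqr_pos t). auto_derive. lra. }
  unfold gauss_aux. split.
  - apply RInt_ge_0; [lra | exact Hex |]. intros t _. left.
    apply Rdiv_lt_0_compat; [apply exp_pos | apply one_add_sqr_pos].
  - replace (gauss x) with (RInt (fun _ => gauss x) 0 1)
      by (rewrite RInt_const; unfold scal; simpl; unfold mult; simpl; ring).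
    apply RInt_le; [lra | exact Hex | apply ex_RInt_const |].
    intros t Ht. unfold gauss_aux_integrand, gauss. pose proof (one_add_sqr_pos t).
    apply Rle_trans with (exp (- (x * x) * (1 + t * t))).
    + unfold Rdiv. rewrite <- (Rmult_1_r (exp _)) at 2. apply Rmult_le_compat_l.
      * left; apply exp_pos.
      * rewrite <- Rinv_1. apply Rinv_le_contravar; [lra|]. pose proof (Rle_0_sqr t). unfold Rsqr in *. lra.
    + destruct (Req_dec (x * x * (t * t)) 0) as [E|E].
      * right. f_equal. nra.
      * left. apply exp_increasing. pose proof (Rle_0_sqr x). pose proof (Rle_0_sqr t).
        unfold Rsqr in *. assert (0 <= x * x * (t * t)) by (apply Rmult_le_pos; auto). nra.
Qed.

Lemma filterlim_gauss_aux : filterlim gauss_aux (Rbar_locally p_infty) (locally 0).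
Proof.
  apply filterlim_p_infty_of_eps. intros eps Heps. exists (Rabs (ln eps) + 1). intros t Ht.
  pose proof (gauss_aux_bounds t). rewrite Rminus_0_r, Rabs_pos_eq by lra.
  apply Rle_lt_trans with (gauss t); [lra|].
  unfold gauss. rewrite <- (exp_ln eps) by auto. apply exp_increasing.
  pose proof (Rle_abs (- ln eps)). rewrite Rabs_Ropp in *.
  pose proof (Rabs_pos (ln eps)). nra.
Qed.

Lemma filterlim_gauss_int : filterlim gauss_int (Rbar_locally p_infty) (locally (sqrt PI / 2)).
Proof.
  pose proof PI_RGT_0.
  apply filterlim_ext_loc with (f := fun x => sqrt (PI / 4 - gauss_aux x)).
  { exists 0. intros x Hx. rewrite <- (gauss_int_sqr_add_aux x).
    replace (gauss_int x * gauss_int x + gauss_aux x - gauss_aux x)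
      with (gauss_int x * gauss_int x) by ring.
    apply sqrt_square. unfold gauss_int. apply RInt_ge_0; [lra | apply ex_RInt_gauss |].
    intros; left; apply exp_pos. }
  replace (sqrt PI / 2) with (sqrt (PI / 4 - 0)).
  2:{ rewrite Rminus_0_r. replace (PI / 4) with (PI * / (2 * 2)) by field.
      rewrite sqrt_mult_alt, sqrt_inv, sqrt_square by lra. reflexivity. }
  apply (filterlim_comp _ _ _ (fun x => PI / 4 - gauss_aux x) sqrt _ (locally (PI / 4 - 0))).
  - apply (filterlim_comp _ _ _ gauss_aux (fun u => PI / 4 - u) _ (locally 0));
      [apply filterlim_gauss_aux|].
    apply (ex_derive_continuous_R (fun u => PI / 4 - u) 0). auto_derive; auto.
  - apply ex_derive_continuous_R. auto_derive. lra.
Qed.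

Lemma filterlim_sqrt_p_infty : filterlim sqrt (Rbar_locally p_infty) (Rbar_locally p_infty).
Proof.
  intros P [M HM]. exists (Rabs M * Rabs M). intros t Ht. apply HM.
  pose proof (Rabs_pos M). pose proof (Rle_abs M).
  apply Rle_lt_trans with (Rabs M); auto.
  rewrite <- (sqrt_square (Rabs M)) by auto. apply sqrt_lt_1_alt. split; auto.
  apply Rmult_le_pos; auto.
Qed.

Lemma is_RInt_gen_Gamma_half :
  is_RInt_gen (Gamma_integrand (/ 2)) (at_right 0) (Rbar_locally p_infty) (sqrt PI).
Proof.
  (* substitute t = s ^ 2 *)
  replace (sqrt PI) with (sqrt PI - 0) by ring.
  apply is_RInt_gen_of_antiderivative with (F := fun t => 2 * gauss_int (sqrt t)).
  - intros a b Ha Hb. apply (is_RInt_derive (fun t => 2 * gauss_int (sqrt t))).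
    + intros y Hy. assert (Hy0 : 0 < y) by (pose proof (Rmin_pos a b Ha Hb); lra).
      assert (Hs : 0 < sqrt y) by (apply sqrt_lt_R0; auto).
      eapply is_derive_ext; [intros t; reflexivity|].
      replace (Gamma_integrand (/ 2) y) with (scal 2 (1 / (2 * sqrt y) * gauss (sqrt y))).
      * apply is_derive_scal, (is_derive_comp gauss_int sqrt); [apply is_derive_gauss_int|].
        apply (is_derive_sqrt (fun t => t) y 1); [apply (is_derive_id y) | auto].
      * unfold scal; simpl; unfold mult; simpl. unfold Gamma_integrand, gauss.
        rewrite sqrt_sqrt by lra.
        replace (/ 2 - 1) with (- (/ 2)) by field. rewrite Rpower_Ropp, Rpower_sqrt by auto.
        field. lra.
    + intros y Hy. assert (0 < y) by (pose proof (Rmin_pos a b Ha Hb); lra).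
      apply ex_derive_continuous_R. unfold Gamma_integrand, Rpower. auto_derive. auto.
  - replace 0 with (2 * gauss_int (sqrt 0)) at 2
      by (rewrite sqrt_0; unfold gauss_int; rewrite RInt_point; unfold zero; simpl; ring).
    apply (filterlim_comp _ _ _ sqrt (fun s => 2 * gauss_int s) _ (locally (sqrt 0))).
    + apply (filterlim_filter_le_1 (F := locally 0)); [apply filter_le_within|].
      apply continuity_pt_filterlim, continuity_pt_sqrt. lra.
    + apply (ex_derive_continuous_R (fun s => 2 * gauss_int s)).
      eexists. apply is_derive_scal, is_derive_gauss_int.
  - replace (sqrt PI) with (2 * (sqrt PI / 2)) by field.
    apply (filterlim_comp _ _ _ sqrt (fun s => 2 * gauss_int s) _ (Rbar_locally p_infty));
      [apply filterlim_sqrt_p_infty|].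
    apply (filterlim_comp _ _ _ gauss_int (fun s => 2 * s) _ (locally (sqrt PI / 2)));
      [apply filterlim_gauss_int|].
    apply (ex_derive_continuous_R (fun s => 2 * s)). auto_derive. auto.
Qed.

Lemma Gamma_pos_unique x l :
  is_RInt_gen (Gamma_integrand x) (at_right 0) (Rbar_locally p_infty) l -> Gamma_pos x = l.
Proof. apply (is_RInt_gen_unique (V := R_CompleteNormedModule)). Qed.

Lemma INR_S_half_pos m : 0 < INR (S m) / 2.
Proof. apply Rdiv_lt_0_compat; [apply lt_0_INR; lia | lra]. Qed.

Lemma is_RInt_gen_Gamma_pos x l :
  is_RInt_gen (Gamma_integrand x) (at_right 0) (Rbar_locally p_infty) l ->
  is_RInt_gen (Gamma_integrand x) (at_right 0) (Rbar_locally p_infty) (Gamma_pos x).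
Proof. intros H. rewrite (Gamma_pos_unique x l H). exact H. Qed.

Lemma is_RInt_gen_Gamma_half_nat m :
  is_RInt_gen (Gamma_integrand (INR (S m) / 2)) (at_right 0) (Rbar_locally p_infty)
    (Gamma_pos (INR (S m) / 2)).
Proof.
  induction m as [m IH] using (well_founded_induction lt_wf).
  destruct m as [|[|m]].
  - replace (INR 1 / 2) with (/ 2) by (simpl; field).
    apply (is_RInt_gen_Gamma_pos _ _ is_RInt_gen_Gamma_half).
  - replace (INR 2 / 2) with 1 by (simpl; field).
    apply (is_RInt_gen_Gamma_pos _ _ is_RInt_gen_Gamma_1).
  - replace (INR (S (S (S m))) / 2) with (INR (S m) / 2 + 1) by (rewrite !S_INR; field).
    apply (is_RInt_gen_Gamma_pos _ _ (is_RInt_gen_Gamma_succ _ _ (INR_S_half_pos m) (IH m ltac:(lia)))).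
Qed.

Lemma Gamma_pos_succ_half_nat m :
  Gamma_pos (INR (S m) / 2 + 1) = INR (S m) / 2 * Gamma_pos (INR (S m) / 2).
Proof.
  apply Gamma_pos_unique, is_RInt_gen_Gamma_succ; [apply INR_S_half_pos|].
  apply is_RInt_gen_Gamma_half_nat.
Qed.

(** * The reciprocal Gamma function *)

Lemma rgamma_pos x : 0 < x -> rgamma x = / Gamma_pos x.
Proof.
  intros Hx. unfold rgamma, rgamma_shift.
  destruct (archimed (- x)) as [A1 A2].
  assert (Hu : (up (- x) <= 0)%Z).
  { destruct (Z_le_gt_dec (up (- x)) 0) as [|Hgt]; [assumption|].
    assert (1 <= IZR (up (- x))) by (apply IZR_le; lia). lra. }
  replace (Z.to_nat (up (- x))) with 0%nat by lia.
  simpl. rewrite Rplus_0_r. unfold Rdiv. ring.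
Qed.

Lemma rgamma_nonpos x : x <= 0 -> rgamma x = x * rgamma (x + 1).
Proof.
  intros Hx. unfold rgamma, rgamma_shift.
  destruct (archimed (- x)) as [A1 A2].
  set (u := up (- x)) in *.
  assert (Hu : (0 < u)%Z) by (apply lt_IZR; lra).
  assert (Hu1 : up (- (x + 1)) = (u - 1)%Z).
  { symmetry. apply tech_up; rewrite minus_IZR; simpl; lra. }
  rewrite Hu1.
  replace (Z.to_nat u) with (S (Z.to_nat (u - 1))) by lia.
  set (m := Z.to_nat (u - 1)).
  cbn [seq map fold_right]. rewrite <- seq_shift, map_map.
  rewrite (map_ext (fun k => x + INR (S k)) (fun k => x + 1 + INR k))
    by (intros; rewrite S_INR; ring).
  replace (x + INR (S m)) with (x + 1 + INR m) by (rewrite S_INR; ring).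
  simpl. unfold Rdiv. ring.
Qed.

Lemma rgamma_half_int x (z : Z) : 2 * x = IZR z -> rgamma x = x * rgamma (x + 1).
Proof.
  intros Hz. destruct (Rle_lt_dec x 0) as [Hx|Hx]; [apply rgamma_nonpos, Hx|].
  assert (Em : x = INR (S (Z.to_nat z - 1)) / 2).
  { assert (0 < IZR z) by lra. apply lt_IZR in H.
    rewrite INR_IZR_INZ. replace (Z.of_nat (S (Z.to_nat z - 1))) with z by lia. lra. }
  rewrite !rgamma_pos by lra. rewrite Em, Gamma_pos_succ_half_nat, <- Em.
  destruct (Req_dec (Gamma_pos x) 0) as [E|E].
  - rewrite E, Rmult_0_r, Rinv_0. ring.
  - field. lra.
Qed.

Lemma rgamma_opp_INR n : rgamma (- INR n) = 0.
Proof.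
  induction n as [|n IH].
  - rewrite (rgamma_half_int _ 0) by (simpl; ring). simpl. ring.
  - rewrite (rgamma_half_int _ (- 2 * Z.of_nat (S n))) by (rewrite mult_IZR, <- INR_IZR_INZ; simpl; ring).
    replace (- INR (S n) + 1) with (- INR n) by (rewrite S_INR; ring). rewrite IH. ring.
Qed.

Lemma rgamma_1 : rgamma 1 = 1.
Proof.
  rewrite rgamma_pos, (Gamma_pos_unique 1 1 is_RInt_gen_Gamma_1) by lra. apply Rinv_1.
Qed.

Lemma rgamma_3_2 : rgamma (/ 2 + 1) = 2 / sqrt PI.
Proof.
  assert (Hs : 0 < sqrt PI) by apply sqrt_lt_R0, PI_RGT_0.
  assert (E : rgamma (/ 2) = / 2 * rgamma (/ 2 + 1)) by (apply (rgamma_half_int _ 1); field).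
  rewrite rgamma_pos, (Gamma_pos_unique _ _ is_RInt_gen_Gamma_half) in E by lra.
  apply (Rmult_eq_reg_l (/ 2)); [rewrite <- E; field | ]; lra.
Qed.

(** * Moments of sin^a against cos (k th) *)

Definition weighted_int (a : nat) (g : R -> R) : R := RInt (fun th => g th * sin th ^ a) 0 PI.

Definition cos_moment (a : nat) (k : R) : R := weighted_int a (fun th => cos (k * th)).

Lemma ex_RInt_cos_mul_sin_pow a k : ex_RInt (fun th => cos (k * th) * sin th ^ a) 0 PI.
Proof. apply ex_RInt_of_ex_derive. intros. auto_derive. auto. Qed.

Lemma cos_moment_succ2 a k :
  cos_moment (a + 2) k =
  / 2 * cos_moment a k + - / 4 * (cos_moment a (k + 2) + cos_moment a (k - 2)).
Proof.
  unfold cos_moment, weighted_int.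
  transitivity (RInt (fun th => / 2 * (cos (k * th) * sin th ^ a) + - / 4 *
     (cos ((k + 2) * th) * sin th ^ a + cos ((k - 2) * th) * sin th ^ a)) 0 PI).
  - apply RInt_ext_R. intros th.
    (* sin^2 = (1 - cos (2 th)) / 2 and the product formula for cos (k th) cos (2 th) *)
    replace ((k + 2) * th) with (k * th + 2 * th) by ring.
    replace ((k - 2) * th) with (k * th - 2 * th) by ring.
    rewrite cos_plus, cos_minus, cos_2a_sin, pow_add. field.
  - rewrite (RInt_plus (V := R_CompleteNormedModule)), !(RInt_scal (V := R_CompleteNormedModule)),
      (RInt_plus (V := R_CompleteNormedModule)); try reflexivity;
      apply ex_RInt_of_ex_derive; intros; auto_derive; auto.
Qed.

Lemma sin_IZR_mul_PI (z : Z) : sin (IZR z * PI) = 0.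
Proof. apply sin_eq_0_1. exists z. reflexivity. Qed.

Lemma cos_2_IZR_mul_PI (z : Z) : cos (2 * IZR z * PI) = 1.
Proof. rewrite Rmult_assoc, cos_2a_sin, sin_IZR_mul_PI. ring. Qed.

Lemma cos_moment_0_0 : cos_moment 0 0 = PI.
Proof.
  unfold cos_moment, weighted_int. transitivity (RInt (fun _ => 1) 0 PI).
  - apply RInt_ext_R. intros x. rewrite Rmult_0_l, cos_0. ring.
  - rewrite RInt_const. unfold scal; simpl; unfold mult; simpl. ring.
Qed.

Lemma cos_moment_0_even (v : Z) : v <> 0%Z -> cos_moment 0 (2 * IZR v) = 0.
Proof.
  intros Hv. assert (Hv' : IZR v <> 0) by (apply not_0_IZR, Hv).
  unfold cos_moment, weighted_int.
  rewrite (RInt_of_antiderivative _ (fun th => sin (2 * IZR v * th) / (2 * IZR v))).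
  - rewrite Rmult_0_r, sin_0. replace (2 * IZR v * PI) with (IZR (2 * v) * PI)
      by (rewrite mult_IZR; ring).
    rewrite sin_IZR_mul_PI. field. exact Hv'.
  - intros th. auto_derive; [auto | field; exact Hv'].
  - intros th. apply ex_derive_continuous_R. auto_derive. auto.
Qed.

Lemma one_sub_4_sqr_IZR_neq_0 (v : Z) : 1 - 4 * IZR v * IZR v <> 0.
Proof.
  replace (1 - 4 * IZR v * IZR v) with (IZR (1 - 4 * v * v)) by (rewrite minus_IZR, !mult_IZR; ring).
  apply not_0_IZR. nia.
Qed.

Lemma cos_moment_1_even (v : Z) : cos_moment 1 (2 * IZR v) = 2 / (1 - 4 * IZR v * IZR v).
Proof.
  set (k := 2 * IZR v).
  assert (Hk : (1 + k) * (1 - k) <> 0)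
    by (replace ((1 + k) * (1 - k)) with (1 - 4 * IZR v * IZR v) by (unfold k; ring);
        apply one_sub_4_sqr_IZR_neq_0).
  assert (H1 : 1 + k <> 0) by (intros E; apply Hk; rewrite E; ring).
  assert (H2 : 1 - k <> 0) by (intros E; apply Hk; rewrite E; ring).
  unfold cos_moment, weighted_int.
  rewrite (RInt_of_antiderivative _
    (fun th => - cos ((1 + k) * th) / (2 * (1 + k)) - cos ((1 - k) * th) / (2 * (1 - k)))).
  - rewrite !Rmult_0_r, cos_0.
    replace ((1 + k) * PI) with (PI + 2 * IZR v * PI) by (unfold k; ring).
    replace ((1 - k) * PI) with (PI + 2 * IZR (- v) * PI) by (unfold k; rewrite opp_IZR; ring).
    rewrite !cos_plus, !cos_2_IZR_mul_PI, cos_PI, sin_PI.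
    replace (1 - 4 * IZR v * IZR v) with ((1 + k) * (1 - k)) by (unfold k; ring).
    field. auto.
  - intros th. auto_derive; [auto|].
    replace ((1 + k) * th) with (th + k * th) by ring.
    replace ((1 - k) * th) with (th - k * th) by ring.
    rewrite sin_plus, sin_minus. field. auto.
  - intros th. apply ex_derive_continuous_R. auto_derive. auto.
Qed.

Lemma cos_moment_odd a n : cos_moment a (INR (2 * n + 1)) = 0.
Proof.
  set (f := fun th => cos (INR (2 * n + 1) * th) * sin th ^ a).
  assert (Hex : ex_RInt f 0 PI) by apply ex_RInt_cos_mul_sin_pow.
  (* th -> PI - th maps the integrand to its opposite *)
  assert (Hsym : RInt f 0 PI = RInt f PI 0).
  { transitivity (RInt (fun y => scal (-1) (f (-1 * y + PI))) 0 PI).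
    - apply RInt_ext_R. intros y. unfold scal; simpl; unfold mult; simpl. unfold f.
      replace (-1 * y + PI) with (PI - y) by ring. rewrite sin_PI_x.
      replace (INR (2 * n + 1) * (PI - y))
        with (2 * IZR (Z.of_nat n) * PI + PI - INR (2 * n + 1) * y)
        by (rewrite <- INR_IZR_INZ, plus_INR, mult_INR; simpl; ring).
      rewrite cos_minus, cos_plus, sin_plus, cos_2_IZR_mul_PI, cos_PI, sin_PI.
      rewrite <- (mult_IZR 2), sin_IZR_mul_PI. ring.
    - etransitivity.
      + apply (RInt_comp_lin (V := R_CompleteNormedModule)).
        replace (-1 * 0 + PI) with PI by ring. replace (-1 * PI + PI) with 0 by ring.
        apply (ex_RInt_swap (V := R_CompleteNormedModule)), Hex.
      + f_equal; ring. }
  assert (Hswap : RInt f PI 0 = - RInt f 0 PI)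
    by (symmetry; apply (opp_RInt_swap (V := R_CompleteNormedModule)), Hex).
  unfold cos_moment, weighted_int. fold f. lra.
Qed.

Definition cos_moment_closed (a : nat) (v : Z) : R :=
  PI * INR (fact a) / 2 ^ a * (-1) ^ Z.abs_nat v *
  rgamma (INR a / 2 - IZR v + 1) * rgamma (INR a / 2 + IZR v + 1).

Lemma pow_m1_abs_succ (v : Z) : (-1) ^ Z.abs_nat (v + 1) = - (-1) ^ Z.abs_nat v.
Proof.
  destruct (Z_le_gt_dec 0 v).
  - replace (Z.abs_nat (v + 1)) with (S (Z.abs_nat v)) by lia. simpl. ring.
  - replace (Z.abs_nat v) with (S (Z.abs_nat (v + 1))) by lia. simpl. ring.
Qed.

Lemma pow_m1_abs_pred (v : Z) : (-1) ^ Z.abs_nat (v - 1) = - (-1) ^ Z.abs_nat v.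
Proof. replace v with (v - 1 + 1)%Z at 2 by ring. rewrite pow_m1_abs_succ. ring. Qed.

Ltac IZR_lra :=
  rewrite ?plus_IZR, ?minus_IZR, ?mult_IZR, ?opp_IZR, <- ?INR_IZR_INZ; simpl; lra.

Lemma cos_moment_closed_opp a v : cos_moment_closed a (- v) = cos_moment_closed a v.
Proof.
  unfold cos_moment_closed. replace (Z.abs_nat (- v)) with (Z.abs_nat v) by lia. rewrite opp_IZR.
  replace (INR a / 2 - - IZR v + 1) with (INR a / 2 + IZR v + 1) by ring.
  replace (INR a / 2 + - IZR v + 1) with (INR a / 2 - IZR v + 1) by ring. ring.
Qed.

Lemma cos_moment_closed_succ2 a v :
  cos_moment_closed (a + 2) v =
  / 2 * cos_moment_closed a v
  + - / 4 * (cos_moment_closed a (v + 1) + cos_moment_closed a (v - 1)).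
Proof.
  unfold cos_moment_closed.
  set (x := INR a / 2 - IZR v + 1). set (y := INR a / 2 + IZR v + 1).
  assert (Ex : rgamma x = x * rgamma (x + 1))
    by (apply (rgamma_half_int _ (Z.of_nat a - 2 * v + 2)); unfold x; IZR_lra).
  assert (Ey : rgamma y = y * rgamma (y + 1))
    by (apply (rgamma_half_int _ (Z.of_nat a + 2 * v + 2)); unfold y; IZR_lra).
  assert (Ex1 : rgamma (x - 1) = (x - 1) * rgamma x).
  { rewrite (rgamma_half_int _ (Z.of_nat a - 2 * v)) by (unfold x; IZR_lra).
    f_equal. f_equal. ring. }
  assert (Ey1 : rgamma (y - 1) = (y - 1) * rgamma y).
  { rewrite (rgamma_half_int _ (Z.of_nat a + 2 * v)) by (unfold y; IZR_lra).
    f_equal. f_equal. ring. }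
  replace (INR (a + 2) / 2 - IZR v + 1) with (x + 1) by (unfold x; rewrite plus_INR; simpl; field).
  replace (INR (a + 2) / 2 + IZR v + 1) with (y + 1) by (unfold y; rewrite plus_INR; simpl; field).
  replace (INR a / 2 - IZR (v + 1) + 1) with (x - 1) by (unfold x; IZR_lra).
  replace (INR a / 2 + IZR (v + 1) + 1) with (y + 1) by (unfold y; IZR_lra).
  replace (INR a / 2 - IZR (v - 1) + 1) with (x + 1) by (unfold x; IZR_lra).
  replace (INR a / 2 + IZR (v - 1) + 1) with (y - 1) by (unfold y; IZR_lra).
  rewrite Ex1, Ey1, Ex, Ey, pow_m1_abs_succ, pow_m1_abs_pred.
  replace (a + 2)%nat with (S (S a)) by lia. rewrite !fact_simpl, !mult_INR, !S_INR.
  (* the bracket collapses because x + y = a + 2 *)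
  assert (Hxy : y = INR a + 2 - x) by (unfold x, y; field).
  rewrite Hxy. simpl. field. apply pow_nonzero. lra.
Qed.

Lemma cos_moment_closed_0_0 : cos_moment_closed 0 0 = PI.
Proof.
  unfold cos_moment_closed. simpl.
  replace (0 / 2 - 0 + 1) with 1 by field. replace (0 / 2 + 0 + 1) with 1 by field.
  rewrite rgamma_1. field.
Qed.

Lemma cos_moment_closed_0_neq (v : Z) : v <> 0%Z -> cos_moment_closed 0 v = 0.
Proof.
  intros Hv. unfold cos_moment_closed. destruct (Z_le_gt_dec 0 v).
  - replace (INR 0 / 2 - IZR v + 1) with (- INR (Z.to_nat (v - 1)))
      by (rewrite INR_IZR_INZ, Z2Nat.id by lia; IZR_lra).
    rewrite rgamma_opp_INR. ring.
  - replace (INR 0 / 2 + IZR v + 1) with (- INR (Z.to_nat (- v - 1)))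
      by (rewrite INR_IZR_INZ, Z2Nat.id by lia; IZR_lra).
    rewrite rgamma_opp_INR. ring.
Qed.

Lemma cos_moment_closed_1_0 : cos_moment_closed 1 0 = 2.
Proof.
  unfold cos_moment_closed. simpl.
  replace (1 / 2 - 0 + 1) with (/ 2 + 1) by field. replace (1 / 2 + 0 + 1) with (/ 2 + 1) by field.
  rewrite rgamma_3_2.
  assert (Hs : 0 < sqrt PI) by apply sqrt_lt_R0, PI_RGT_0.
  rewrite <- (sqrt_sqrt PI) at 1 by (pose proof PI_RGT_0; lra). field. lra.
Qed.

Lemma cos_moment_closed_1_succ (v : Z) :
  cos_moment_closed 1 (v + 1) * (2 * IZR v + 3) = (2 * IZR v - 1) * cos_moment_closed 1 v.
Proof.
  unfold cos_moment_closed.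
  set (x := INR 1 / 2 - IZR v + 1). set (y := INR 1 / 2 + IZR v + 1).
  replace (INR 1 / 2 - IZR (v + 1) + 1) with (x - 1) by (unfold x; IZR_lra).
  replace (INR 1 / 2 + IZR (v + 1) + 1) with (y + 1) by (unfold y; IZR_lra).
  rewrite (rgamma_half_int (x - 1) (1 - 2 * v)) by (unfold x; IZR_lra).
  rewrite (rgamma_half_int y (3 + 2 * v)) by (unfold y; IZR_lra).
  replace (x - 1 + 1) with x by ring. rewrite pow_m1_abs_succ.
  unfold x, y. simpl. field.
Qed.

Lemma cos_moment_closed_1 (v : Z) : cos_moment_closed 1 v = 2 / (1 - 4 * IZR v * IZR v).
Proof.
  assert (Hnat : forall n, cos_moment_closed 1 (Z.of_nat n) = 2 / (1 - 4 * INR n * INR n)).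
  { induction n as [|n IH].
    - change (Z.of_nat 0) with 0%Z. rewrite cos_moment_closed_1_0. simpl. field.
    - pose proof (cos_moment_closed_1_succ (Z.of_nat n)) as E.
      rewrite <- INR_IZR_INZ, IH in E. replace (Z.of_nat n + 1)%Z with (Z.of_nat (S n)) in E by lia.
      pose proof (pos_INR n).
      pose proof (one_sub_4_sqr_IZR_neq_0 (Z.of_nat n)) as H0.
      pose proof (one_sub_4_sqr_IZR_neq_0 (Z.of_nat (S n))) as H1.
      rewrite <- INR_IZR_INZ in H0, H1. rewrite S_INR in *.
      apply (Rmult_eq_reg_r (2 * INR n + 3)); [rewrite E; field; auto | lra]. }
  destruct (Z_le_gt_dec 0 v).
  - replace v with (Z.of_nat (Z.to_nat v)) by lia. rewrite Hnat, <- INR_IZR_INZ. reflexivity.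
  - rewrite <- cos_moment_closed_opp. replace (- v)%Z with (Z.of_nat (Z.to_nat (- v))) by lia.
    rewrite Hnat, INR_IZR_INZ, Z2Nat.id by lia. rewrite opp_IZR. f_equal. ring.
Qed.

Lemma cos_moment_even a (v : Z) : cos_moment a (2 * IZR v) = cos_moment_closed a v.
Proof.
  revert v. induction a as [a IH] using (well_founded_induction lt_wf). intros v.
  destruct a as [|[|a]].
  - destruct (Z.eq_dec v 0) as [->|Hv].
    + rewrite Rmult_0_r, cos_moment_0_0, cos_moment_closed_0_0. reflexivity.
    + rewrite cos_moment_0_even, cos_moment_closed_0_neq by exact Hv. reflexivity.
  - rewrite cos_moment_1_even, cos_moment_closed_1. reflexivity.
  - replace (S (S a)) with (a + 2)%nat by lia.
    rewrite cos_moment_succ2, cos_moment_closed_succ2, <- !(IH a) by lia.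
    rewrite plus_IZR, minus_IZR. do 2 f_equal; f_equal; f_equal; ring.
Qed.

(** * Discrete orthogonality of cosines on the grid u PI / M *)

Lemma sum_f_R0_switch (F : nat -> nat -> R) N K :
  sum_f_R0 (fun u => sum_f_R0 (F u) K) N = sum_f_R0 (fun m => sum_f_R0 (fun u => F u m) N) K.
Proof.
  rewrite <- !sum_n_Reals.
  rewrite (sum_n_ext (fun u => sum_f_R0 (F u) K) (fun u => sum_n (F u) K))
    by (intros; rewrite sum_n_Reals; reflexivity).
  rewrite sum_n_switch. apply sum_n_ext. intros; apply sum_n_Reals.
Qed.

Lemma sum_f_R0_delta (g : nat -> R) N v : (v <= N)%nat ->
  (forall i, (i <= N)%nat -> i <> v -> g i = 0) -> sum_f_R0 g N = g v.
Proof.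
  intros Hv H. induction N as [|N IH].
  - replace v with 0%nat by lia. reflexivity.
  - destruct (Nat.eq_dec v (S N)) as [->|Hne].
    + rewrite tech5, sum_eq_R0; [ring | intros; apply H; lia].
    + rewrite tech5, IH, (H (S N)); [ring | lia | lia | lia | intros; apply H; lia].
Qed.

Lemma sum_eps_mul M (f : nat -> R) : (1 <= M)%nat ->
  sum_f_R0 (fun u => eps M u * f u) M = sum_f_R0 f M - f 0%nat / 2 - f M / 2.
Proof.
  intros HM. destruct M as [|m]; [lia|].
  assert (Hinner : forall n, (n <= m)%nat ->
    sum_f_R0 (fun u => eps (S m) u * f u) n = sum_f_R0 f n - f 0%nat / 2).
  { induction n as [|n IH]; intros Hn.
    - simpl. unfold eps. simpl. field.
    - rewrite !tech5, IH by lia. unfold eps.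
      replace (Nat.eqb (S n) 0) with false by reflexivity.
      replace (Nat.eqb (S n) (S m)) with false by (symmetry; apply Nat.eqb_neq; lia).
      simpl. ring. }
  rewrite !tech5, Hinner by lia. unfold eps.
  rewrite Nat.eqb_refl, Bool.orb_true_r. field.
Qed.

Definition trapezoid_cos_sum (M : nat) (r : R) : R :=
  sum_f_R0 (fun u => eps M u * cos (r * INR u * PI / INR M)) M.

Lemma trapezoid_cos_sum_opp M r : trapezoid_cos_sum M (- r) = trapezoid_cos_sum M r.
Proof.
  unfold trapezoid_cos_sum. apply sum_eq. intros u _.
  replace (- r * INR u * PI / INR M) with (- (r * INR u * PI / INR M)) by (unfold Rdiv; ring).
  rewrite cos_neg. reflexivity.
Qed.

Lemma trapezoid_cos_sum_eq_M M r : (1 <= M)%nat ->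
  (forall u, cos (r * INR u * PI / INR M) = 1) -> trapezoid_cos_sum M r = INR M.
Proof.
  intros HM H1. unfold trapezoid_cos_sum.
  rewrite (sum_eq _ (fun u => eps M u * (fun _ => 1) u)) by (intros; rewrite H1; reflexivity).
  rewrite sum_eps_mul, sum_cte, S_INR by exact HM. field.
Qed.

Lemma sum_cos_telescope x N :
  2 * sin (x / 2) * sum_f_R0 (fun u => cos (INR u * x)) N = sin ((INR N + / 2) * x) + sin (x / 2).
Proof.
  induction N as [|N IH].
  - simpl. rewrite Rmult_0_l, cos_0. replace ((0 + / 2) * x) with (x / 2) by field. ring.
  - rewrite tech5, Rmult_plus_distr_l, IH.
    replace ((INR N + / 2) * x) with (INR (S N) * x - x / 2) by (rewrite S_INR; field).
    replace ((INR (S N) + / 2) * x) with (INR (S N) * x + x / 2) by field.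
    rewrite sin_minus, sin_plus. ring.
Qed.

Lemma trapezoid_cos_sum_nat M n : (0 < n < 2 * M)%nat -> trapezoid_cos_sum M (INR n) = 0.
Proof.
  intros Hn.
  assert (HM : 0 < INR M) by (apply lt_0_INR; lia).
  assert (Hn0 : 0 < INR n) by (apply lt_0_INR; lia).
  assert (Hn2 : INR n < INR (2 * M)) by (apply lt_INR; lia).
  rewrite mult_INR in Hn2. simpl in Hn2.
  pose proof PI_RGT_0.
  set (x := INR n * PI / INR M).
  assert (Hs : 0 < sin (x / 2)).
  { apply sin_gt_0.
    - unfold x. apply Rdiv_lt_0_compat; [apply Rdiv_lt_0_compat; nra | lra].
    - apply (Rmult_lt_reg_r (2 * INR M)); [lra|].
      replace (x / 2 * (2 * INR M)) with (INR n * PI) by (unfold x; field; lra). nra. }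
  unfold trapezoid_cos_sum.
  rewrite (sum_eq _ (fun u => eps M u * (fun u => cos (INR u * x)) u))
    by (intros u _; unfold x; f_equal; f_equal; field; lra).
  rewrite sum_eps_mul by lia.
  apply (Rmult_eq_reg_l (2 * sin (x / 2))); [|lra].
  replace (2 * sin (x / 2) * (sum_f_R0 (fun u => cos (INR u * x)) M - cos (INR 0 * x) / 2
             - cos (INR M * x) / 2))
    with (2 * sin (x / 2) * sum_f_R0 (fun u => cos (INR u * x)) M
          - sin (x / 2) * cos (INR 0 * x) - sin (x / 2) * cos (INR M * x)) by field.
  rewrite sum_cos_telescope.
  replace ((INR M + / 2) * x) with (INR M * x + x / 2) by field.
  replace (INR M * x) with (IZR (Z.of_nat n) * PI) by (unfold x; rewrite <- INR_IZR_INZ; field; lra).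
  rewrite sin_plus, sin_IZR_mul_PI. replace (INR 0 * x) with 0 by (simpl; ring). rewrite cos_0. ring.
Qed.

Lemma trapezoid_cos_sum_0 M : (1 <= M)%nat -> trapezoid_cos_sum M 0 = INR M.
Proof.
  intros HM. apply trapezoid_cos_sum_eq_M; [exact HM|].
  intros u. unfold Rdiv. rewrite !Rmult_0_l. apply cos_0.
Qed.

Lemma trapezoid_cos_sum_2M M : (1 <= M)%nat -> trapezoid_cos_sum M (INR M + INR M) = INR M.
Proof.
  intros HM. apply trapezoid_cos_sum_eq_M; [exact HM|].
  assert (HM0 : INR M <> 0) by (apply not_0_INR; lia).
  intros u. replace ((INR M + INR M) * INR u * PI / INR M) with (0 + 2 * INR u * PI) by (field; auto).
  rewrite cos_period. apply cos_0.
Qed.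

Lemma cos_grid_orthogonal M p q : (1 <= M)%nat -> (p <= M)%nat -> (q <= M)%nat ->
  eps M p * sum_f_R0 (fun u =>
    eps M u * (cos (INR p * INR u * PI / INR M) * cos (INR q * INR u * PI / INR M))) M
  = if Nat.eqb p q then INR M / 2 else 0.
Proof.
  intros HM Hp Hq.
  assert (HM0 : INR M <> 0) by (apply not_0_INR; lia).
  replace (sum_f_R0 _ M)
    with (/ 2 * (trapezoid_cos_sum M (INR p + INR q) + trapezoid_cos_sum M (INR p - INR q))).
  2:{ unfold trapezoid_cos_sum. rewrite <- sum_plus, scal_sum. apply sum_eq. intros u _.
      replace ((INR p + INR q) * INR u * PI / INR M)
        with (INR p * INR u * PI / INR M + INR q * INR u * PI / INR M) by (field; auto).
      replace ((INR p - INR q) * INR u * PI / INR M)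
        with (INR p * INR u * PI / INR M - INR q * INR u * PI / INR M) by (field; auto).
      rewrite cos_plus, cos_minus. field. }
  destruct (Nat.eq_dec p q) as [<-|Hpq].
  - rewrite Nat.eqb_refl, Rminus_diag, trapezoid_cos_sum_0 by exact HM.
    unfold eps. destruct (Nat.eq_dec p 0) as [->|Hp0]; [|destruct (Nat.eq_dec p M) as [->|HpM]].
    + simpl. rewrite Rplus_0_r, trapezoid_cos_sum_0 by exact HM. field.
    + rewrite trapezoid_cos_sum_2M, Nat.eqb_refl, Bool.orb_true_r by exact HM. field.
    + rewrite <- plus_INR, trapezoid_cos_sum_nat by lia.
      rewrite (proj2 (Nat.eqb_neq p 0) Hp0), (proj2 (Nat.eqb_neq p M) HpM). simpl. field.
  - rewrite (proj2 (Nat.eqb_neq p q) Hpq), <- plus_INR, trapezoid_cos_sum_nat by lia.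
    destruct (le_lt_dec q p).
    + rewrite <- minus_INR, trapezoid_cos_sum_nat by lia. ring.
    + replace (INR p - INR q) with (- INR (q - p)) by (rewrite minus_INR by lia; ring).
      rewrite trapezoid_cos_sum_opp, trapezoid_cos_sum_nat by lia. ring.
Qed.

Lemma trapezoid_cos_coeff M (c : nat -> R) j : (1 <= M)%nat -> (j <= M)%nat ->
  sum_f_R0 (fun u => eps M u *
    sum_f_R0 (fun m => eps M (2 * m) * c m * cos (INR (2 * m * u) * PI / INR M)) (M / 2) *
    cos (INR j * (INR u * PI / INR M))) M
  = sum_f_R0 (fun m => c m * (if Nat.eqb (2 * m) j then INR M / 2 else 0)) (M / 2).
Proof.
  intros HM Hj.
  rewrite (sum_eq _ (fun u => sum_f_R0 (fun m => c m * (eps M (2 * m) *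
      (eps M u * (cos (INR (2 * m) * INR u * PI / INR M) * cos (INR j * INR u * PI / INR M)))))
      (M / 2))).
  2:{ intros u _. rewrite (Rmult_comm (eps M u * _) (cos _)), <- Rmult_assoc, scal_sum.
      apply sum_eq. intros m _.
      rewrite mult_INR. unfold Rdiv.
      replace (INR j * (INR u * PI * / INR M)) with (INR j * INR u * PI * / INR M) by ring. ring. }
  rewrite sum_f_R0_switch. apply sum_eq. intros m Hm.
  rewrite <- (cos_grid_orthogonal M (2 * m) j HM) by
    (try exact Hj; pose proof (Nat.Div0.mul_div_le M 2); lia).
  rewrite !scal_sum. apply sum_eq. intros; ring.
Qed.

(** * Exactness of the quadrature rule *)

Definition quadrature (M alpha : nat) (g : R -> R) : R :=
  sum_f_R0 (fun u => chi M alpha u * g (INR u * PI / INR M)) M.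

Lemma powerRZ_2_pred_mul_2 a : powerRZ 2 (Z.of_nat a - 1) * 2 = 2 ^ a.
Proof.
  rewrite pow_powerRZ. replace (Z.of_nat a) with ((Z.of_nat a - 1) + 1)%Z at 2 by ring.
  rewrite powerRZ_add by lra. simpl. ring.
Qed.

Lemma quadrature_cos M a j : (1 <= M)%nat -> (j <= M)%nat ->
  quadrature M a (fun th => cos (INR j * th)) = cos_moment a (INR j).
Proof.
  intros HM Hj.
  set (K := PI * INR (fact a) / (powerRZ 2 (Z.of_nat a - 1) * INR M)).
  set (c := fun m => (-1) ^ m * rgamma (INR a / 2 - INR m + 1) * rgamma (INR a / 2 + INR m + 1)).
  transitivity (K * sum_f_R0 (fun u => eps M u *
    sum_f_R0 (fun m => eps M (2 * m) * c m * cos (INR (2 * m * u) * PI / INR M)) (M / 2) *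
    cos (INR j * (INR u * PI / INR M))) M).
  { unfold quadrature, chi, omega. fold K. rewrite scal_sum. apply sum_eq. intros u _.
    rewrite (sum_eq _ (fun m => eps M (2 * m) * c m * cos (INR (2 * m * u) * PI / INR M)))
      by (intros; unfold c; ring).
    ring. }
  rewrite trapezoid_cos_coeff by assumption.
  destruct (Nat.Even_or_Odd j) as [[n ->]|[n ->]].
  - rewrite (sum_f_R0_delta _ _ n), Nat.eqb_refl.
    + replace (INR (2 * n)) with (2 * IZR (Z.of_nat n))
        by (rewrite mult_INR, <- INR_IZR_INZ; simpl; ring).
      rewrite cos_moment_even. unfold cos_moment_closed, K, c.
      rewrite Zabs2Nat.id, <- INR_IZR_INZ, <- (powerRZ_2_pred_mul_2 a).
      field. split; [apply powerRZ_NOR; lra | apply not_0_INR; lia].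
    + apply Nat.div_le_lower_bound; lia.
    + intros i _ Hi. rewrite (proj2 (Nat.eqb_neq _ _)) by lia. ring.
  - rewrite sum_eq_R0, cos_moment_odd; [ring|].
    intros i _. rewrite (proj2 (Nat.eqb_neq _ _)) by lia. ring.
Qed.

Lemma quadrature_ext M a g1 g2 : (forall th, g1 th = g2 th) -> quadrature M a g1 = quadrature M a g2.
Proof. intros H. unfold quadrature. apply sum_eq. intros; rewrite H; reflexivity. Qed.

Lemma weighted_int_ext a g1 g2 : (forall th, g1 th = g2 th) -> weighted_int a g1 = weighted_int a g2.
Proof. intros H. unfold weighted_int. apply RInt_ext_R. intros; rewrite H; reflexivity. Qed.

Lemma quadrature_lin M a c1 c2 g1 g2 :
  quadrature M a (fun th => c1 * g1 th + c2 * g2 th) = c1 * quadrature M a g1 + c2 * quadrature M a g2.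
Proof. unfold quadrature. rewrite !scal_sum, <- sum_plus. apply sum_eq. intros; ring. Qed.

Lemma weighted_int_lin a c1 c2 g1 g2 :
  ex_RInt (fun th => g1 th * sin th ^ a) 0 PI -> ex_RInt (fun th => g2 th * sin th ^ a) 0 PI ->
  weighted_int a (fun th => c1 * g1 th + c2 * g2 th) = c1 * weighted_int a g1 + c2 * weighted_int a g2.
Proof.
  intros H1 H2. unfold weighted_int.
  rewrite (RInt_ext_R _ (fun th => c1 * (g1 th * sin th ^ a) + c2 * (g2 th * sin th ^ a)))
    by (intros; ring).
  rewrite (RInt_plus (V := R_CompleteNormedModule)), !(RInt_scal (V := R_CompleteNormedModule));
    try reflexivity; auto; apply (ex_RInt_scal (V := R_CompleteNormedModule)); assumption.
Qed.

Lemma quadrature_exact_cos_pow_mul_cos M a k j : (1 <= M)%nat -> (j + k <= M)%nat ->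
  quadrature M a (fun th => cos th ^ k * cos (INR j * th)) =
  weighted_int a (fun th => cos th ^ k * cos (INR j * th)).
Proof.
  intros HM. revert j. induction k as [|k IH]; intros j Hj.
  - rewrite (quadrature_ext _ _ _ (fun th => cos (INR j * th))) by (intros; simpl; ring).
    rewrite (weighted_int_ext _ _ (fun th => cos (INR j * th))) by (intros; simpl; ring).
    apply quadrature_cos; [exact HM | lia].
  - destruct j as [|j].
    + assert (E : forall th, cos th ^ S k * cos (INR 0 * th) = cos th ^ k * cos (INR 1 * th))
        by (intros th; simpl; rewrite Rmult_0_l, Rmult_1_l, cos_0; ring).
      rewrite (quadrature_ext _ _ _ _ E), (weighted_int_ext _ _ _ E). apply IH. lia.
    + (* cos th cos ((j+1) th) = (cos ((j+2) th) + cos (j th)) / 2 *)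
      assert (E : forall th, cos th ^ S k * cos (INR (S j) * th) =
         / 2 * (cos th ^ k * cos (INR (S (S j)) * th)) + / 2 * (cos th ^ k * cos (INR j * th))).
      { intros th. rewrite !S_INR.
        replace ((INR j + 1 + 1) * th) with ((INR j + 1) * th + th) by ring.
        replace (INR j * th) with ((INR j + 1) * th - th) by ring.
        rewrite cos_plus, cos_minus. simpl. field. }
      rewrite (quadrature_ext _ _ _ _ E), (weighted_int_ext _ _ _ E).
      rewrite quadrature_lin, weighted_int_lin, !IH by (lia || (apply ex_RInt_of_ex_derive; intros; auto_derive; auto)).
      reflexivity.
Qed.

Lemma is_RInt_weighted_sum a (c : nat -> R) (g : nat -> R -> R) N :
  (forall k, ex_RInt (fun th => g k th * sin th ^ a) 0 PI) ->
  is_RInt (fun th => sum_f_R0 (fun k => c k * g k th) N * sin th ^ a) 0 PI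
    (sum_f_R0 (fun k => c k * weighted_int a (g k)) N).
Proof.
  intros Hg.
  assert (Hk : forall k, is_RInt (fun th => c k * (g k th * sin th ^ a)) 0 PI (c k * weighted_int a (g k)))
    by (intros k; apply (is_RInt_scal (V := R_NormedModule)), (RInt_correct (V := R_CompleteNormedModule)), Hg).
  induction N as [|N IH].
  - eapply is_RInt_ext; [| apply (Hk 0%nat)].
    intros th _. match goal with |- ?x = ?y => change (@eq R x y) end. simpl. ring.
  - eapply is_RInt_ext; [| apply (is_RInt_plus (V := R_NormedModule)); [apply IH | apply (Hk (S N))]].
    intros th _. match goal with |- ?x = ?y => change (@eq R x y) end.
    rewrite tech5. unfold plus; simpl. ring.
Qed.

Lemma weighted_int_sum a (c : nat -> R) (g : nat -> R -> R) N :
  (forall k, ex_RInt (fun th => g k th * sin th ^ a) 0 PI) ->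
  weighted_int a (fun th => sum_f_R0 (fun k => c k * g k th) N) =
  sum_f_R0 (fun k => c k * weighted_int a (g k)) N.
Proof.
  intros Hg. apply (is_RInt_unique (V := R_CompleteNormedModule)), is_RInt_weighted_sum, Hg.
Qed.

Lemma quadrature_sum M a (c : nat -> R) (g : nat -> R -> R) N :
  quadrature M a (fun th => sum_f_R0 (fun k => c k * g k th) N) =
  sum_f_R0 (fun k => c k * quadrature M a (g k)) N.
Proof.
  unfold quadrature.
  rewrite (sum_eq _ (fun u => sum_f_R0 (fun k => c k * (chi M a u * g k (INR u * PI / INR M))) N))
    by (intros u _; rewrite scal_sum; apply sum_eq; intros; ring).
  rewrite sum_f_R0_switch. apply sum_eq. intros k _. rewrite scal_sum. apply sum_eq. intros; ring.
Qed.

Theorem lemma1 (M alpha : nat) (a : nat -> R) :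
  (1 <= M)%nat ->
  RInt (fun th => poly_eval a M (cos th) * sin th ^ alpha) 0 PI =
  sum_f_R0 (fun u => chi M alpha u * poly_eval a M (cos (INR u * PI / INR M))) M.
Proof.
  intros HM.
  change (weighted_int alpha (fun th => sum_f_R0 (fun k => a k * cos th ^ k) M) =
          quadrature M alpha (fun th => sum_f_R0 (fun k => a k * cos th ^ k) M)).
  rewrite weighted_int_sum, quadrature_sum.
  - apply sum_eq. intros k Hk. f_equal.
    rewrite (quadrature_ext _ _ _ (fun th => cos th ^ k * cos (INR 0 * th))),
      (weighted_int_ext _ _ (fun th => cos th ^ k * cos (INR 0 * th)))
      by (intros; simpl; rewrite Rmult_0_l, cos_0; ring).
    symmetry. apply quadrature_exact_cos_pow_mul_cos; lia.
  - intros k. apply ex_RInt_of_ex_derive. intros. auto_derive. auto.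
Qed.
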